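(* Let $N\ge 3$ be an integer, let $\Delta\theta^*=2\pi/N$, and let $P\neq 0$ be a real constant. Let $(\theta_k)_{k\ge1}$ and $(\omega_k)_{k\ge1}$ be real sequences with $\omega_k>0$ for all $k$, satisfying for every $k\ge 1$ $$\theta_{k+1}=\theta_k+\Delta\theta^*,\qquad \omega_{k+1}-\omega_k=P\sin\theta_k\left[\frac{1}{\omega_k}+\frac{1}{\omega_{k+1}}\right],$$ and the assumption $\omega_k^2>|P|$ for every $k\ge1$. If there exists an index $k_0$ with $\theta_{k_0} \bmod 2\pi\in\{0,\Delta\theta^*/2\}$, then the solution is periodic with period $N$: for every $k\ge k_0$ (indeed for every $k\ge1$), $\theta_{k+N}\equiv\theta_k \pmod{2\pi}$ and $\omega_{k+N}=\omega_k$.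
   Context: This is the ''discrete zero dynamics'' of a devil-stick with parameter $\phi=\pm\pi/2$; in the paper $P=\pm\frac{g(\Delta\theta^* )^2}{2R\sin(\Delta\theta^* )}$ (sign $+$ for $\phi=-\pi/2$, $-$ for $\phi=\pi/2$) with constants $g,R>0$. The hypothesis $\omega_k^2>|P|$ for all $k$ is the paper's Assumption 1. *)

From Stdlib Require Import Reals.
Open Scope R_scope.

Definition cong2pi (x y : R) : Prop := exists m : Z, x = y + 2 * PI * IZR m.

(** The angles form an arithmetic progression with step [2 pi / N], and the
    hypothesis on [theta k0] makes [sin theta] antisymmetric about the centres
    [2 k0 - e + q N] ([e] in {0, 1}, [q] any natural number).  Because
    [omega^2 > |P|], the implicit recurrence can be run backwards uniquely, so
    the antisymmetry of the forcing term forces [omega] to be symmetric about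
    the shifted centres [2 k0 - e + q N + 1].  Two reflections whose centres
    differ by [N] compose to a translation by [N]. *)

From Stdlib Require Import Reals Lra Lia Psatz.
Open Scope R_scope.

Lemma mul_gt_of_sqr_gt (a x y : R) :
  0 < x -> 0 < y -> x ^ 2 > a -> y ^ 2 > a -> a < x * y.
Proof. intros hx hy hxa hya; destruct (Rle_or_lt a 0); nra. Qed.

Lemma mul_sin_le_abs (P x : R) : P * sin x <= Rabs P.
Proof. pose proof (SIN_bound x); unfold Rabs; destruct (Rcase_abs P); nra. Qed.

Lemma sin_add_eq_0 (x y : R) (n : Z) : x + y = 2 * PI * IZR n -> sin y = - sin x.
Proof.
  intros hxy.
  assert (hmid : sin ((x + y) / 2) = 0).
  { apply sin_eq_0_1; exists n; lra. }
  pose proof (form3 x y) as hsum; rewrite hmid in hsum; lra.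
Qed.

Lemma opposite_steps_cancel (c x w y : R) :
  0 < x -> 0 < w -> 0 < y -> c < x * y ->
  w - x = c * (/ x + / w) -> y - w = - c * (/ w + / y) -> x = y.
Proof.
  intros hx hw hy hc hxw hwy.
  assert (hyx : (y - x) * (x * y) = c * (y - x)).
  { replace (y - x) with ((w - x) + (y - w)) at 1 by ring.
    rewrite hxw, hwy; field; lra. }
  assert (hyx' : (y - x) * (x * y - c) = 0) by lra.
  apply Rmult_integral in hyx'; destruct hyx'; lra.
Qed.

Section Reflection.

Variables (c omega : nat -> R) (C : nat).
Hypothesis omega_pos : forall k, (1 <= k)%nat -> 0 < omega k.
Hypothesis omega_rec : forall k, (1 <= k)%nat ->
  omega (S k) - omega k = c k * (/ omega k + / omega (S k)).
Hypothesis c_antisym : forall i j, (1 <= i)%nat -> (1 <= j)%nat ->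
  (i + j = C)%nat -> c j = - c i.
Hypothesis c_small : forall i j, (1 <= i)%nat -> (1 <= j)%nat ->
  c i < omega i * omega j.

Definition reflects_at_distance (d : nat) : Prop :=
  forall i, (1 <= i)%nat -> (2 * i + d = S C)%nat -> omega i = omega (i + d).

Lemma reflects_at_distance_pair d :
  reflects_at_distance d /\ reflects_at_distance (S d).
Proof.
  induction d as [|d [IHd IHSd]]; split.
  - intros i _ _; rewrite Nat.add_0_r; reflexivity.
  - intros i hi hC.
    assert (hci : c i = - c i) by (apply c_antisym; lia).
    pose proof (omega_rec i hi) as hrec.
    replace (i + 1)%nat with (S i) by lia.
    replace (c i) with 0 in hrec by lra; lra.
  - exact IHSd.
  - intros i hi hC.
    set (j := (S i + d)%nat).
    assert (hinner : omega (S i) = omega j) by (apply IHd; unfold j; lia).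
    replace (i + S (S d))%nat with (S j) by (unfold j; lia).
    apply (opposite_steps_cancel (c i) _ (omega (S i))).
    + apply omega_pos; unfold j; lia.
    + apply omega_pos; unfold j; lia.
    + apply omega_pos; unfold j; lia.
    + apply c_small; unfold j; lia.
    + apply omega_rec; exact hi.
    + rewrite hinner, omega_rec by (unfold j; lia).
      rewrite (c_antisym i j) by (unfold j; lia); ring.
Qed.

Lemma omega_reflect i j : (1 <= i)%nat -> (1 <= j)%nat ->
  (i + j = S C)%nat -> omega i = omega j.
Proof.
  intros hi hj hij.
  destruct (Nat.le_gt_cases i j).
  - replace j with (i + (j - i))%nat by lia.
    apply (proj1 (reflects_at_distance_pair (j - i))); lia.
  - replace i with (j + (i - j))%nat by lia.
    symmetry; apply (proj1 (reflects_at_distance_pair (i - j))); lia.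
Qed.

End Reflection.

Lemma periodic_of_reflections {A : Type} (f : nat -> A) (C0 N : nat) :
  (forall q i j, (1 <= i)%nat -> (1 <= j)%nat -> (i + j = C0 + q * N)%nat ->
     f i = f j) ->
  forall k, (1 <= k)%nat -> f (k + N)%nat = f k.
Proof.
  intros hrefl k hk.
  destruct N as [|N']; [rewrite Nat.add_0_r; reflexivity|].
  assert (hk_le : (k <= k * S N')%nat) by nia.
  set (j := (C0 + S k * S N' - k)%nat).
  transitivity (f j).
  - apply (hrefl (S (S k))); unfold j; simpl; lia.
  - symmetry; apply (hrefl (S k)); unfold j; simpl; lia.
Qed.

Section Progression.

Variables (theta : nat -> R) (d : R) (N : nat).
Hypothesis theta_step : forall k, (1 <= k)%nat -> theta (S k) = theta k + d.
Hypothesis d_period : d * INR N = 2 * PI.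

Lemma theta_closed_form i : (1 <= i)%nat -> theta i = theta 1%nat + (INR i - 1) * d.
Proof.
  induction i as [|[|i] IHi]; intros hi; [lia | simpl; ring |].
  rewrite theta_step, IHi by lia; rewrite (S_INR (S i)); ring.
Qed.

Lemma theta_add_period k : (1 <= k)%nat -> theta (k + N)%nat = theta k + 2 * PI.
Proof.
  intros hk.
  rewrite (theta_closed_form (k + N)), (theta_closed_form k), plus_INR by lia.
  lra.
Qed.

Lemma sin_theta_antisym (k0 e : nat) (m : Z) :
  (1 <= k0)%nat -> theta k0 = INR e * d / 2 + 2 * PI * IZR m ->
  forall q i j, (1 <= i)%nat -> (1 <= j)%nat -> (i + j + e = 2 * k0 + q * N)%nat ->
  sin (theta j) = - sin (theta i).
Proof.
  intros hk0 hcentre q i j hi hj hij.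
  apply (sin_add_eq_0 _ _ (Z.of_nat q + 2 * m)).
  apply (f_equal INR) in hij; rewrite !plus_INR, !mult_INR in hij; simpl in hij.
  assert (hijd : (INR i + INR j + INR e) * d = (2 * INR k0 + INR q * INR N) * d)
    by (rewrite hij; ring).
  assert (hqN : INR q * INR N * d = INR q * (2 * PI)) by (rewrite <- d_period; ring).
  rewrite theta_closed_form in hcentre by exact hk0.
  rewrite (theta_closed_form i), (theta_closed_form j) by assumption.
  rewrite plus_IZR, mult_IZR, <- INR_IZR_INZ.
  lra.
Qed.

End Progression.

Theorem theorem1 (N : nat) (P : R) (theta omega : nat -> R) :
  (3 <= N)%nat ->
  P <> 0 ->
  (forall k, (1 <= k)%nat -> 0 < omega k) ->
  (forall k, (1 <= k)%nat -> theta (S k) = theta k + 2 * PI / INR N) ->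
  (forall k, (1 <= k)%nat ->
     omega (S k) - omega k = P * sin (theta k) * (/ omega k + / omega (S k))) ->
  (forall k, (1 <= k)%nat -> omega k ^ 2 > Rabs P) ->
  (exists k0, (1 <= k0)%nat /\
     (cong2pi (theta k0) 0 \/ cong2pi (theta k0) ((2 * PI / INR N) / 2))) ->
  forall k, (1 <= k)%nat ->
    cong2pi (theta (k + N)%nat) (theta k) /\ omega (k + N)%nat = omega k.
Proof.
  intros HN _ Hpos Hth Hrec Hsq [k0 [Hk0 Hcentre]] k Hk.
  set (d := 2 * PI / INR N) in *.
  assert (HdN : d * INR N = 2 * PI).
  { assert (0 < INR N) by (apply lt_0_INR; lia); unfold d; field; lra. }
  assert (He : exists (e : nat) (m : Z),
             (e <= 1)%nat /\ theta k0 = INR e * d / 2 + 2 * PI * IZR m).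
  { destruct Hcentre as [[m hm] | [m hm]];
      [exists 0%nat, m | exists 1%nat, m]; simpl; split; lia || lra. }
  destruct He as [e [m [He Hk0e]]].
  split.
  - exists 1%Z; rewrite (theta_add_period theta d N) by assumption; simpl; ring.
  - apply (periodic_of_reflections omega (2 * k0 + 1 - e)); [|exact Hk].
    intros q i j hi hj hij.
    apply (omega_reflect (fun i => P * sin (theta i)) omega (2 * k0 + q * N - e));
      try assumption; try lia.
    + intros i' j' hi' hj' hij'.
      rewrite (sin_theta_antisym theta d N Hth HdN k0 e m Hk0 Hk0e q i' j')
        by (assumption || lia); ring.
    + intros i' j' hi' hj'.
      apply (Rle_lt_trans _ (Rabs P)); [apply mul_sin_le_abs |].
      apply mul_gt_of_sqr_gt; auto.
Qed.
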